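(* Let $N\ge4$, let $e_1,\dots,e_N$ be the standard basis of $\mathbb{R}^N$, $F(x)=\prod_{i=1}^N|x-e_i|^2$, $f=\log F$, and $B=\frac1N\sum_{i=1}^N e_i$. Then $F$ has its $N$ absolute minima at $e_1,\dots,e_N$; $B$ is a critical point of $f$ whose Hessian has the eigenvalue $\frac{2N^2}{N-1}$ with multiplicity $1$ (eigenvector $B$) and the eigenvalue $2(N-3)\left(\frac{N}{N-1}\right)^2$ with multiplicity $N-1$, so $B$ is a nondegenerate local minimum; and the $N$ points $Q_i=\frac{2}{N-1}B+\frac{N-3}{N-1}e_i$ ($1\le i\le N$) are nondegenerate critical points of $f$ of negativity index $1$.
   Context: $|\cdot|$ is the Euclidean norm. The negativity index of a nondegenerate critical point is the number of negative eigenvalues of the Hessian. *)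

From HB Require Import structures.
From Stdlib Require Import Reals Lra ClassicalEpsilon FunctionalExtensionality.
From mathcomp Require Import all_boot all_order all_algebra.

Set Implicit Arguments.
Unset Strict Implicit.
Unset Printing Implicit Defensive.

Local Open Scope R_scope.

Definition Req_bool (x y : R) : bool := if Req_EM_T x y then true else false.

Lemma Req_boolP : Equality.axiom Req_bool.
Proof. move=> x y; rewrite /Req_bool; case: Req_EM_T => H; by constructor. Qed.

HB.instance Definition _ := hasDecEq.Build R Req_boolP.

Definition R_find (P : pred R) (n : nat) : option R :=
  match excluded_middle_informative (exists x, P x) with
  | left H => Some (proj1_sig (constructive_indefinite_description _ H))
  | right _ => None
  end.

Lemma R_find_correct P n x : R_find P n = Some x -> P x.
Proof.
rewrite /R_find; case: excluded_middle_informative => // H [<-].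
exact: proj2_sig (constructive_indefinite_description _ H).
Qed.

Lemma R_find_complete (P : pred R) : (exists x, P x) -> exists n, R_find P n.
Proof.
move=> H; exists 0%N; rewrite /R_find; case: excluded_middle_informative => //.
Qed.

Lemma R_find_ext (P Q : pred R) : P =1 Q -> R_find P =1 R_find Q.
Proof.
move=> E; have -> : P = Q by apply: functional_extensionality.
by [].
Qed.

HB.instance Definition _ :=
  hasChoice.Build R R_find_correct R_find_complete R_find_ext.

Lemma R_addrA : associative Rplus. Proof. move=> x y z; ring. Qed.
Lemma R_addrC : commutative Rplus. Proof. move=> x y; ring. Qed.
Lemma R_add0r : left_id 0 Rplus. Proof. move=> x; ring. Qed.
Lemma R_addNr : left_inverse 0 Ropp Rplus. Proof. move=> x; ring. Qed.

HB.instance Definition _ :=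
  GRing.isZmodule.Build R R_addrA R_addrC R_add0r R_addNr.

Lemma R_mulrA : associative Rmult. Proof. move=> x y z; ring. Qed.
Lemma R_mulrC : commutative Rmult. Proof. move=> x y; ring. Qed.
Lemma R_mul1r : left_id 1 Rmult. Proof. move=> x; ring. Qed.
Lemma R_mulrDl : left_distributive Rmult Rplus. Proof. move=> x y z; ring. Qed.
Lemma R_one_neq0 : (1 : R) != 0.
Proof. apply/eqP => H; exact: R1_neq_R0 H. Qed.

HB.instance Definition _ :=
  GRing.Zmodule_isComNzRing.Build R R_mulrA R_mulrC R_mul1r R_mulrDl R_one_neq0.

Definition R_inv (x : R) : R := if Req_bool x 0 then 0 else Rinv x.

Lemma R_mulVf (x : R) : x != 0 -> R_inv x * x = 1.
Proof.
move=> /eqP Hx; rewrite /R_inv /Req_bool.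
destruct (Req_EM_T x 0) as [E|E]; first by [].
exact: Rinv_l.
Qed.

Lemma R_inv0 : R_inv 0 = 0.
Proof. by rewrite /R_inv /Req_bool; case: Req_EM_T. Qed.

HB.instance Definition _ := GRing.ComNzRing_isField.Build R R_mulVf R_inv0.

Definition vec (N : nat) := 'I_N -> R.

Definition ebasis (N : nat) (i : 'I_N) : vec N :=
  fun j => if j == i then 1 else 0.

Definition shift (N : nat) (x : vec N) (i : 'I_N) (t : R) : vec N :=
  fun j => x j + t * ebasis i j.

Definition dist2 (N : nat) (x y : vec N) : R :=
  \big[Rplus/0]_(k < N) (x k - y k) ^ 2.

Definition has_partial (N : nat) (f : vec N -> R) (i : 'I_N) (x : vec N)
    (l : R) : Prop :=
  derivable_pt_lim (fun t => f (shift x i t)) 0 l.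

Definition critical_point (N : nat) (f : vec N -> R) (x : vec N) : Prop :=
  forall i, has_partial f i x 0.

Definition is_hessian (N : nat) (f : vec N -> R) (x : vec N)
    (H : 'M[R]_N) : Prop :=
  exists (d : R) (g : 'I_N -> vec N -> R), 0 < d /\
    (forall i y, dist2 y x < d * d -> has_partial f i y (g i y)) /\
    (forall i j, has_partial (g i) j x (H i j)).

Definition nondegenerate_hess (N : nat) (H : 'M[R]_N) : Prop := H \in unitmx.

Definition eig_mult (N : nat) (H : 'M[R]_N) (a : R) : nat :=
  \rank (eigenspace H a).

(* negativity index: number of negative eigenvalues counted with
   multiplicity.  s lists (without repetition) reals containing all
   negative eigenvalues; the index is the total multiplicity. *)
Definition negativity_index (N : nat) (H : 'M[R]_N) (k : nat) : Prop :=
  exists s : seq R, uniq s /\ (forall a, a \in s -> a < 0) /\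
    (forall a, a < 0 -> eigenvalue H a -> a \in s) /\
    (\sum_(a <- s) eig_mult H a)%N = k.

Definition Fprod (N : nat) (x : vec N) : R :=
  \big[Rmult/1]_(i < N) dist2 x (ebasis i).

Definition flog (N : nat) (x : vec N) : R := ln (Fprod x).

Definition barycenter (N : nat) : vec N := fun _ => / INR N.
Arguments barycenter : clear implicits.

Definition Qpt (N : nat) (i : 'I_N) : vec N :=
  fun j => 2 / (INR N - 1) * barycenter N j
           + (INR N - 3) / (INR N - 1) * ebasis i j.

(* a vector as a row vector (MathComp convention: v *m H = a *: v) *)
Definition rowv (N : nat) (v : vec N) : 'rV[R]_N := \row_j v j.

Definition lambda1 (N : nat) : R := 2 * INR N ^ 2 / (INR N - 1).
Definition lambda2 (N : nat) : R := 2 * (INR N - 3) * (INR N / (INR N - 1)) ^ 2.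

(* Write s = |x|^2, so that |x - e_k|^2 = s - 2 x_k + 1.  Then
   d_i log F = 2 sum_k (x_i - [i = k]) / |x - e_k|^2, and the Hessian is a
   combination of the identity I, the all-ones matrix J, and two rank-one
   terms built from x.  At B and at Q_i the distances |x - e_k|^2 take at most
   two values, the gradient vanishes by direct computation, and the Hessian has
   the shape mu I + k1 J + k2 w w^T with sum_k w_k = 0.  On such a matrix the
   row vector v satisfies v H = a v only if (a - mu - N k1) sum v = 0,
   (a - mu - k2 |w|^2) <v, w> = 0 and (a - mu) v = (k1 sum v) 1 + (k2 <v, w>) w,
   so its spectrum is contained in {mu, mu + N k1, mu + k2 |w|^2}.  At B we have
   k2 = 0, which gives lambda2 on the hyperplane sum v = 0 and lambda1 on B; at
   Q_i the three eigenvalues are positive, positive and negative, the negative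
   one simple with eigenvector w.

   For the local minimality of B, put c = |B - e_k|^2 = (N-1)/N,
   p = |y - B|^2 and w_k = |y - e_k|^2 - c.  Then sum_k w_k = N p and
   sum_k w_k^2 <= N p^2 + 4 p, and ln(1 + u) >= u - 5/8 u^2 for |u| <= 1/5
   gives log F(y) - log F(B) >= (N p)/c - 5/(8 c^2) (N p^2 + 4 p) >= 0 for
   small p. *)

From Stdlib Require Import Reals Lra FunctionalExtensionality Classical.
From HB Require Import structures.
From mathcomp Require Import all_boot all_order all_algebra.
Set Implicit Arguments. Unset Strict Implicit. Unset Printing Implicit Defensive.
Local Open Scope R_scope.

HB.instance Definition _ := Monoid.isComLaw.Build R 0 Rplus R_addrA R_addrC R_add0r.
HB.instance Definition _ := Monoid.isComLaw.Build R 1 Rmult R_mulrA R_mulrC R_mul1r.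

Notation iverson b := (if b then 1 else 0).

Lemma sumR_iverson N (a : 'I_N) (F : 'I_N -> R) :
  \big[Rplus/0]_(k < N) (iverson (k == a) * F k) = F a.
Proof.
rewrite (bigD1 a) //= eqxx big1 => [|k]; rewrite ?andTb; try move=> /negbTE ->; lra.
Qed.

Lemma sumR_iverson_sym N (a : 'I_N) (F : 'I_N -> R) :
  \big[Rplus/0]_(k < N) (iverson (a == k) * F k) = F a.
Proof. by rewrite -[RHS](sumR_iverson a F); apply: eq_bigr => k _; rewrite eq_sym. Qed.

Lemma sumR_const N (c : R) : \big[Rplus/0]_(k < N) c = INR N * c.
Proof.
rewrite big_const_ord; elim: N => [|n IH] /=; first lra.
by rewrite IH; case: n {IH} => [|n] /=; lra.
Qed.

Lemma sumR_add N (F G : 'I_N -> R) :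
  \big[Rplus/0]_(k < N) (F k + G k)
  = \big[Rplus/0]_(k < N) F k + \big[Rplus/0]_(k < N) G k.
Proof. exact: big_split. Qed.

Lemma sumR_scale N (c : R) (F : 'I_N -> R) :
  \big[Rplus/0]_(k < N) (c * F k) = c * \big[Rplus/0]_(k < N) F k.
Proof. by apply: (big_ind2 (fun a b => a = c * b)) => [|a1 a2 b1 b2 -> ->|]; try lra. Qed.

Lemma sumR_le N (F G : 'I_N -> R) : (forall k, F k <= G k) ->
  \big[Rplus/0]_(k < N) F k <= \big[Rplus/0]_(k < N) G k.
Proof. by move=> H; apply: (big_ind2 (fun a b => a <= b)) => *; [lra | lra | exact: H]. Qed.

Lemma sumR_ge0 N (F : 'I_N -> R) : (forall k, 0 <= F k) ->
  0 <= \big[Rplus/0]_(k < N) F k.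
Proof. by move=> H; apply: (big_ind (fun a => 0 <= a)) => *; [lra | lra | exact: H]. Qed.

Lemma sumR_ge_term N (F : 'I_N -> R) a : (forall k, 0 <= F k) ->
  F a <= \big[Rplus/0]_(k < N) F k.
Proof.
move=> H; rewrite (bigD1 a) //= -[X in X <= _]Rplus_0_r; apply: Rplus_le_compat_l.
by apply: (big_ind (fun x => 0 <= x)) => *; [lra | lra | exact: H].
Qed.

Lemma prodR_gt0 N (F : 'I_N -> R) : (forall k, 0 < F k) ->
  0 < \big[Rmult/1]_(k < N) F k.
Proof. by move=> H; apply: (big_ind (fun a => 0 < a)) => *; [lra | nra | exact: H]. Qed.

Lemma prodR_ge0 N (F : 'I_N -> R) : (forall k, 0 <= F k) ->
  0 <= \big[Rmult/1]_(k < N) F k.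
Proof. by move=> H; apply: (big_ind (fun a => 0 <= a)) => *; [lra | nra | exact: H]. Qed.

Lemma ln_prodR N (F : 'I_N -> R) : (forall k, 0 < F k) ->
  ln (\big[Rmult/1]_(k < N) F k) = \big[Rplus/0]_(k < N) ln (F k).
Proof.
move=> H.
suff [] : 0 < \big[Rmult/1]_(k < N) F k /\
          ln (\big[Rmult/1]_(k < N) F k) = \big[Rplus/0]_(k < N) ln (F k) by [].
apply: (big_ind2 (fun a b => 0 < a /\ ln a = b)).
- by split; [lra | exact: ln_1].
- by move=> a1 a2 b1 b2 [h1 <-] [h2 <-]; split; [nra | exact: ln_mult].
- by move=> k _; split; [exact: H |].
Qed.

Definition sqnorm N (x : vec N) := \big[Rplus/0]_(m < N) x m ^ 2.

Lemma ebasisE N (i j : 'I_N) : ebasis i j = iverson (j == i). Proof. by []. Qed.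

Lemma dist2_shift N (x y : vec N) i t :
  dist2 (shift x i t) y = dist2 x y + 2 * t * (x i - y i) + t ^ 2.
Proof.
rewrite /dist2 /shift (eq_bigr (fun m => (x m - y m) ^ 2
  + (2 * t * (iverson (m == i) * (x m - y m)) + t ^ 2 * (iverson (m == i) * 1)))).
  by rewrite !sumR_add !sumR_scale !sumR_iverson; ring.
by move=> m _; rewrite ebasisE; case: (m == i); ring.
Qed.

Lemma dist2_ebasis N (x : vec N) k : dist2 x (ebasis k) = sqnorm x - 2 * x k + 1.
Proof.
rewrite /dist2 /sqnorm (eq_bigr (fun m => x m ^ 2
  + ((-2) * (iverson (m == k) * x m) + iverson (m == k) * 1))).
  by rewrite !sumR_add !sumR_scale !sumR_iverson; ring.
by move=> m _; rewrite ebasisE; case: (m == k); ring.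
Qed.

Lemma dist2C N (x y : vec N) : dist2 x y = dist2 y x.
Proof. by apply: eq_bigr => m _; ring. Qed.

Lemma dist2_ge0 N (x y : vec N) : 0 <= dist2 x y.
Proof. by apply: sumR_ge0 => m; exact: pow2_ge_0. Qed.

Lemma dist2xx N (x : vec N) : dist2 x x = 0.
Proof. by rewrite /dist2 (eq_bigr (fun _ => 0)) ?sumR_const => *; ring. Qed.

Lemma dist2_le_twice N (x y z : vec N) : dist2 x z <= 2 * dist2 x y + 2 * dist2 y z.
Proof.
rewrite /dist2 -!sumR_scale -sumR_add; apply: sumR_le => m /=.
have := pow2_ge_0 (x m - 2 * y m + z m); nra.
Qed.

Lemma dist2_eq0 N (x y : vec N) : dist2 x y = 0 -> x = y.
Proof.
move=> H; apply: functional_extensionality => m.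
have : (x m - y m) ^ 2 <= dist2 x y.
  exact: (sumR_ge_term (F := fun k => (x k - y k) ^ 2)) (fun k => pow2_ge_0 _).
have := pow2_ge_0 (x m - y m); rewrite H; nra.
Qed.

Lemma derivable_pt_lim_eq (f : R -> R) x l l' :
  l = l' -> derivable_pt_lim f x l -> derivable_pt_lim f x l'.
Proof. by move=> ->. Qed.

Lemma derivable_pt_lim_sumR (I : Type) (s : seq I) (f : I -> R -> R) (l : I -> R) t0 :
  (forall k, derivable_pt_lim (f k) t0 (l k)) ->
  derivable_pt_lim (fun t => \big[Rplus/0]_(k <- s) f k t) t0
                   (\big[Rplus/0]_(k <- s) l k).
Proof.
move=> H; elim: s => [|a s IH].
  apply: (derivable_pt_lim_ext (fct_cte 0)); first by move=> t; rewrite big_nil.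
  by rewrite big_nil; exact: derivable_pt_lim_const.
apply: (derivable_pt_lim_ext (f a + (fun t => \big[Rplus/0]_(k <- s) f k t))%F).
  by move=> t; rewrite big_cons.
by rewrite big_cons; exact: derivable_pt_lim_plus.
Qed.

Lemma derivable_pt_lim_prodR (I : Type) (s : seq I) (f : I -> R -> R) (l : I -> R) t0 :
  (forall k, derivable_pt_lim (f k) t0 (l k)) -> (forall k, f k t0 <> 0) ->
  derivable_pt_lim (fun t => \big[Rmult/1]_(k <- s) f k t) t0
    ((\big[Rmult/1]_(k <- s) f k t0) * \big[Rplus/0]_(k <- s) (l k / f k t0)).
Proof.
move=> H Hn; elim: s => [|a s IH].
  apply: (derivable_pt_lim_ext (fct_cte 1)); first by move=> t; rewrite big_nil.
  rewrite !big_nil; apply: (derivable_pt_lim_eq (l := 0)); first ring.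
  exact: derivable_pt_lim_const.
apply: (derivable_pt_lim_ext (f a * (fun t => \big[Rmult/1]_(k <- s) f k t))%F).
  by move=> t; rewrite big_cons.
rewrite !big_cons; apply: derivable_pt_lim_eq;
  last by apply: derivable_pt_lim_mult; [exact: H | exact: IH].
have := Hn a; move: (\big[Rmult/1]_(j <- s) f j t0) (\big[Rplus/0]_(j <- s) (l j / f j t0)).
by move=> P S h; field.
Qed.

Lemma derivable_pt_lim_quadratic a b t0 :
  derivable_pt_lim (fun t => a + 2 * t * b + t ^ 2) t0 (2 * b + 2 * t0).
Proof.
apply: (derivable_pt_lim_ext (fct_cte a + (mult_real_fct (2 * b) Ranalysis1.id
          + (Ranalysis1.id * Ranalysis1.id)))%F).
  by move=> t; cbv beta delta [plus_fct mult_real_fct fct_cte mult_fct Ranalysis1.id]; ring.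
apply: derivable_pt_lim_eq; last first.
  apply: derivable_pt_lim_plus; first exact: derivable_pt_lim_const.
  apply: derivable_pt_lim_plus; first exact/derivable_pt_lim_scal/derivable_pt_lim_id.
  by apply: derivable_pt_lim_mult; exact: derivable_pt_lim_id.
by cbv beta delta [Ranalysis1.id]; ring.
Qed.

Lemma derivable_pt_lim_affine a b t0 : derivable_pt_lim (fun t => a + t * b) t0 b.
Proof.
apply: (derivable_pt_lim_ext (fct_cte a + mult_real_fct b Ranalysis1.id)%F).
  by move=> t; cbv beta delta [plus_fct mult_real_fct fct_cte Ranalysis1.id]; ring.
apply: derivable_pt_lim_eq; last first.
  apply: derivable_pt_lim_plus; first exact: derivable_pt_lim_const.
  exact/derivable_pt_lim_scal/derivable_pt_lim_id.
ring.
Qed.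

Lemma ln_ge_quadratic u : -1/5 <= u <= 1/5 -> u - 5/8 * u ^ 2 <= ln (1 + u).
Proof.
move=> [hu1 hu2].
pose g v := ln (1 + v) + 5 / 8 * (0 + 2 * v * (- (4 / 5)) + v ^ 2).
pose g' v := / (1 + v) * 1 + 5 / 8 * (2 * (- (4 / 5)) + 2 * v).
have g_der v : -1 < v -> derivable_pt_lim g v (g' v).
  move=> hv; apply: (derivable_pt_lim_ext
    (plus_fct (Ranalysis1.comp ln (fun v => 1 + v * 1))
       (mult_real_fct (5/8) (fun v => 0 + 2 * v * (- (4 / 5)) + v ^ 2)))).
    by move=> t; rewrite /plus_fct /mult_real_fct /Ranalysis1.comp /g; congr (ln _ + _); ring.
  apply: derivable_pt_lim_eq; last first.
    apply: derivable_pt_lim_plus; last exact/derivable_pt_lim_scal/derivable_pt_lim_quadratic.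
    apply: derivable_pt_lim_comp; first exact: derivable_pt_lim_affine.
    by apply: derivable_pt_lim_ln; lra.
  by rewrite /g'; congr (/ _ * _ + _); ring.
(* g' v = v (1/4 + 5/4 v) / (1 + v), so g' has the sign of v on [-1/5, 1/5] *)
have g'_sign v : -1/5 <= v -> 0 <= v * g' v.
  move=> hv; have hr : 0 < / (1 + v) by apply: Rinv_0_lt_compat; lra.
  have -> : v * g' v = / (1 + v) * (v * v * (1/4 + 5/4 * v)) by rewrite /g'; field; lra.
  by apply: Rmult_le_pos; [lra | apply: Rmult_le_pos; nra].
have g0 : g 0 = 0 by rewrite /g Rplus_0_r ln_1; ring.
suff : 0 <= g u by rewrite /g; lra.
case: (Rtotal_order u 0) => [hlt|[->|hgt]]; last 2 first.
- by rewrite g0; lra.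
- have [c [hc1 hc2]] := MVT_cor2 g g' 0 u hgt (fun c hc => g_der c ltac:(lra)).
  have := g'_sign c ltac:(lra); rewrite g0 in hc1; nra.
have [c [hc1 hc2]] := MVT_cor2 g g' u 0 hlt (fun c hc => g_der c ltac:(lra)).
have := g'_sign c ltac:(lra); rewrite g0 in hc1; nra.
Qed.

Lemma INR_ge4 N : (4 <= N)%N -> 4 <= INR N.
Proof. by move=> h; replace 4 with (INR 4) by (simpl; ring); apply/le_INR/leP. Qed.

(** * Gradient and Hessian of log F *)

Definition gradf N (x : vec N) (i : 'I_N) : R :=
  \big[Rplus/0]_(k < N) (2 * (x i - ebasis k i) / dist2 x (ebasis k)).

Definition hessf N (x : vec N) (i j : 'I_N) : R :=
  \big[Rplus/0]_(k < N) ((2 * ebasis j i * dist2 x (ebasis k)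
      - 2 * (x j - ebasis k j) * (2 * (x i - ebasis k i))) / dist2 x (ebasis k) ^ 2).

Lemma has_partial_flog N (x : vec N) i : (forall k, 0 < dist2 x (ebasis k)) ->
  has_partial (@flog N) i x (gradf x i).
Proof.
move=> Hp; rewrite /has_partial /flog.
pose f k t := dist2 x (ebasis k) + 2 * t * (x i - ebasis k i) + t ^ 2.
apply: (derivable_pt_lim_ext (Ranalysis1.comp ln (fun t => \big[Rmult/1]_(k < N) f k t))).
  by move=> t; rewrite /Ranalysis1.comp /Fprod; congr ln; apply: eq_bigr => k _; rewrite dist2_shift.
have f0 k : f k 0 = dist2 x (ebasis k) by rewrite /f; ring.
have F0 : \big[Rmult/1]_(k < N) f k 0 = Fprod x by apply: eq_bigr => k _; exact: f0.
have Fpos : 0 < Fprod x by apply: prodR_gt0.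
apply: derivable_pt_lim_eq; last first.
  apply: derivable_pt_lim_comp; last by apply: derivable_pt_lim_ln; rewrite F0.
  apply: (@derivable_pt_lim_prodR _ _ f (fun k => 2 * (x i - ebasis k i))) => k.
    by apply: (derivable_pt_lim_eq _ (derivable_pt_lim_quadratic _ _ 0)); ring.
  by rewrite f0; have := Hp k; lra.
rewrite F0 /gradf (eq_bigr (fun k => 2 * (x i - ebasis k i) / dist2 x (ebasis k))).
  by rewrite -Rmult_assoc Rinv_l ?Rmult_1_l //; lra.
by move=> k _; rewrite f0.
Qed.

Lemma has_partial_gradf N (x : vec N) i j : (forall k, 0 < dist2 x (ebasis k)) ->
  has_partial (fun y => gradf y i) j x (hessf x i j).
Proof.
move=> Hp; rewrite /has_partial /gradf /hessf.
apply: (derivable_pt_lim_ext (fun t => \big[Rplus/0]_(k < N)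
   (div_fct (fun t => 2 * (x i - ebasis k i) + t * (2 * ebasis j i))
            (fun t => dist2 x (ebasis k) + 2 * t * (x j - ebasis k j) + t ^ 2) t))).
  by move=> t; apply: eq_bigr => k _; rewrite /div_fct dist2_shift /shift; congr (_ / _); ring.
apply: derivable_pt_lim_sumR => k; have := Hp k => hk.
apply: derivable_pt_lim_eq; last first.
  apply: derivable_pt_lim_div; [exact: derivable_pt_lim_affine
                               | exact: derivable_pt_lim_quadratic | lra].
by rewrite /Rsqr; field; lra.
Qed.

Lemma critical_point_flog N (x : vec N) : (forall k, 0 < dist2 x (ebasis k)) ->
  (forall i, gradf x i = 0) -> critical_point (@flog N) x.
Proof. by move=> Hp H0 i; rewrite -(H0 i); exact: has_partial_flog. Qed.

(* On the ball of radius min(1, m/4) around x, dist2_le_twice keeps the distances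
   to the e_k above m/4. *)
Lemma is_hessian_flog N (x : vec N) m : 0 < m -> (forall k, m <= dist2 x (ebasis k)) ->
  is_hessian (@flog N) x (\matrix_(i, j) hessf x i j)%R.
Proof.
move=> Hm Hk; exists (Rmin 1 (m / 4)), (fun i y => gradf y i).
have Hd : 0 < Rmin 1 (m / 4) by apply: Rmin_pos; lra.
have Hd1 := Rmin_l 1 (m / 4); have Hd2 := Rmin_r 1 (m / 4).
split; [exact: Hd | split].
- move=> i y Hy; apply: has_partial_flog => k.
  have := dist2_le_twice x y (ebasis k); have := Hk k; rewrite (dist2C x y).
  have : Rmin 1 (m / 4) * Rmin 1 (m / 4) <= Rmin 1 (m / 4) by nra.
  lra.
- by move=> i j; rewrite mxE; apply: has_partial_gradf => k; have := Hk k; lra.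
Qed.

Definition sum_inv_dist2 N (x : vec N) := \big[Rplus/0]_(k < N) / dist2 x (ebasis k).
Definition sum_inv_dist2_sq N (x : vec N) := \big[Rplus/0]_(k < N) / dist2 x (ebasis k) ^ 2.

Lemma gradfE N (x : vec N) i : (forall k, dist2 x (ebasis k) <> 0) ->
  gradf x i = 2 * (x i * sum_inv_dist2 x - / dist2 x (ebasis i)).
Proof.
move=> H; rewrite /gradf /sum_inv_dist2 (eq_bigr (fun k => (2 * x i) * / dist2 x (ebasis k)
   + (-2) * (iverson (i == k) * / dist2 x (ebasis k)))).
  by rewrite sumR_add !sumR_scale sumR_iverson_sym; ring.
by move=> k _; rewrite ebasisE; case: (i == k); field; exact: H.
Qed.

Lemma hessfE N (x : vec N) i j : (forall k, dist2 x (ebasis k) <> 0) ->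
  hessf x i j = 2 * iverson (i == j) * sum_inv_dist2 x - 4 * x i * x j * sum_inv_dist2_sq x
    + 4 * x i / dist2 x (ebasis j) ^ 2 + 4 * x j / dist2 x (ebasis i) ^ 2
    - 4 * iverson (j == i) / dist2 x (ebasis i) ^ 2.
Proof.
move=> H; rewrite /hessf /sum_inv_dist2 /sum_inv_dist2_sq.
rewrite (eq_bigr (fun k => (2 * iverson (i == j)) * / dist2 x (ebasis k)
   + ((-4 * x i * x j) * / dist2 x (ebasis k) ^ 2
   + ((4 * x i) * (iverson (j == k) * / dist2 x (ebasis k) ^ 2)
   + ((4 * x j) * (iverson (i == k) * / dist2 x (ebasis k) ^ 2)
   + (-4) * (iverson (i == k) * (iverson (j == k) * / dist2 x (ebasis k) ^ 2))))))).
  by rewrite !sumR_add !sumR_scale !sumR_iverson_sym; field; split; exact: H.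
move=> k _; rewrite !ebasisE; have := H k.
by case: (i == k); case: (j == k); move=> h; field.
Qed.

(** * Matrices of the form mu I + k1 J + k2 w w^T *)

Lemma sumRE N (F : 'I_N -> R) : (\sum_(k < N) F k)%R = \big[Rplus/0]_(k < N) F k.
Proof. by []. Qed.
Lemma addRE (x y : R) : (x + y)%R = x + y. Proof. by []. Qed.
Lemma oppRE (x : R) : (- x)%R = - x. Proof. by []. Qed.
Lemma mulRE (x y : R) : (x * y)%R = x * y. Proof. by []. Qed.
Lemma oneRE : (1%R : R) = 1. Proof. by []. Qed.
Lemma zeroRE : (0%R : R) = 0. Proof. by []. Qed.

Ltac R_eq_goal := match goal with |- @eq _ ?a ?b => change (@eq R a b) end.

Definition row_sum N (v : 'rV[R]_N) := \big[Rplus/0]_(a < N) v ord0 a.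
Definition row_dot N (w : vec N) (v : 'rV[R]_N) := \big[Rplus/0]_(a < N) (v ord0 a * w a).

Section IdentityOnesOuter.
Variables (N : nat) (H : 'M[R]_N) (mu k1 k2 : R) (w : vec N).
Hypothesis HE : forall a b, H a b = mu * iverson (a == b) + k1 + k2 * w a * w b.

Lemma mulmx_IJw (v : 'rV[R]_N) b :
  (v *m H)%R ord0 b = mu * v ord0 b + k1 * row_sum v + k2 * row_dot w v * w b.
Proof.
rewrite mxE sumRE (eq_bigr (fun j => mu * (iverson (j == b) * v ord0 j)
  + (k1 * v ord0 j + (k2 * w b) * (v ord0 j * w j)))).
  by rewrite !sumR_add !sumR_scale sumR_iverson; R_eq_goal; rewrite /row_sum /row_dot; ring.
by move=> j _; rewrite mulRE HE; set vj := v ord0 j; case: (j == b); R_eq_goal; ring.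
Qed.

Lemma eigenvector_IJw (v : 'rV[R]_N) a q :
  \big[Rplus/0]_(b < N) w b = 0 -> \big[Rplus/0]_(b < N) (w b * w b) = q ->
  (v *m H)%R = (a *: v)%R ->
  [/\ (a - (mu + INR N * k1)) * row_sum v = 0,
      (a - (mu + k2 * q)) * row_dot w v = 0 &
      forall b, (a - mu) * v ord0 b = k1 * row_sum v + k2 * row_dot w v * w b].
Proof.
move=> Hw Hq Hv.
have Hb b : a * v ord0 b = mu * v ord0 b + k1 * row_sum v + k2 * row_dot w v * w b.
  by rewrite -mulmx_IJw Hv mxE.
split.
- have : \big[Rplus/0]_(b < N) (a * v ord0 b)
       = \big[Rplus/0]_(b < N) (mu * v ord0 b + (k1 * row_sum v + (k2 * row_dot w v) * w b)).
    by apply: eq_bigr => b _; rewrite Hb; ring.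
  by rewrite !sumR_add !sumR_scale sumR_const Hw -/(row_sum v); lra.
- have : \big[Rplus/0]_(b < N) (a * (v ord0 b * w b)) = \big[Rplus/0]_(b < N)
      (mu * (v ord0 b * w b) + ((k1 * row_sum v) * w b + (k2 * row_dot w v) * (w b * w b))).
    by apply: eq_bigr => b _; rewrite -Rmult_assoc Hb; ring.
  by rewrite !sumR_add !sumR_scale Hw Hq -/(row_dot w v); lra.
- by move=> b; rewrite Rmult_minus_distr_r Hb; ring.
Qed.

End IdentityOnesOuter.

Lemma row_sum_rowv N (u : vec N) : row_sum (rowv u) = \big[Rplus/0]_(a < N) u a.
Proof. by apply: eq_bigr => a _; rewrite mxE. Qed.

Lemma row_dot_rowv N (w u : vec N) : row_dot w (rowv u) = \big[Rplus/0]_(a < N) (u a * w a).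
Proof. by apply: eq_bigr => a _; rewrite mxE. Qed.

Lemma rV_neq0_coord N (v : 'rV[R]_N) : (v != 0)%R -> exists b, v ord0 b <> 0.
Proof.
move=> hv; apply: NNPP => hn; move/negP: hv; apply; apply/eqP/matrixP => i j.
by rewrite (ord1 i) mxE; apply: NNPP => h; apply: hn; exists j.
Qed.

Lemma rowv_neq0 N (u : vec N) b : u b <> 0 -> (rowv u != 0)%R.
Proof.
move=> hb; apply/eqP => h; apply: hb.
by have := congr1 (fun M : 'rV[R]_N => M ord0 b) h; rewrite !mxE.
Qed.

Lemma scale_rowv N (v : 'rV[R]_N) (u : vec N) c : (forall b, v ord0 b = c * u b) ->
  v = (c *: rowv u)%R.
Proof. by move=> h; apply/matrixP => i j; rewrite (ord1 i) !mxE h. Qed.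

Lemma eig_mult_eq1 N (H : 'M[R]_N) a (u : vec N) : (rowv u != 0)%R ->
  (rowv u *m H)%R = (a *: rowv u)%R ->
  (forall v : 'rV[R]_N, (v *m H)%R = (a *: v)%R -> exists c, v = (c *: rowv u)%R) ->
  eig_mult H a = 1%N.
Proof.
move=> hnz hu hall; rewrite /eig_mult; transitivity (\rank (rowv u)); last by rewrite rank_rV hnz.
apply: eqmx_rank; apply/andP; split; last exact/eigenspaceP.
apply/row_subP => i; have /eigenspaceP := row_sub i (eigenspace H a).
by move=> /hall [c ->]; apply/sub_rVP; exists c.
Qed.

Lemma unitmx_not_eigenvalue0 N (H : 'M[R]_N) : ~~ eigenvalue H 0 -> H \in unitmx.
Proof.
rewrite -row_free_unit -kermx_eq0 /eigenvalue /eigenspace negbK.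
have -> : ((0 : R)%:M : 'M[R]_N)%R = 0%R by apply/matrixP => i j; rewrite !mxE GRing.mul0rn.
by rewrite GRing.subr0.
Qed.

Lemma rank_const1 N : (0 < N)%N -> \rank (const_mx 1 : 'M[R]_N) = 1%N.
Proof.
move=> hN; pose i1 : 'I_N := Ordinal hN.
have -> : (const_mx 1 : 'M[R]_N) = ((const_mx 1 : 'cV[R]_N) *m (const_mx 1 : 'rV[R]_N))%R.
  by apply/matrixP => i j; rewrite !mxE big_ord1 !mxE GRing.mulr1.
apply/eqP; rewrite eqn_leq (leq_trans (mxrankM_maxr _ _) (rank_leq_row _)) lt0n mxrank_eq0.
apply/eqP => h; have := congr1 (fun M : 'M[R]_N => M i1 i1) h.
by rewrite !mxE big_ord1 !mxE GRing.mulr1; exact: R1_neq_R0.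
Qed.

(** * The barycenter B *)

Section Barycenter.
Variable N : nat.
Hypothesis hN : (4 <= N)%N.
Let n := INR N.
Let hn : 4 <= n. Proof. exact: INR_ge4. Qed.

Lemma dist2_barycenter k : dist2 (barycenter N) (ebasis k) = (n - 1) / n.
Proof. by rewrite dist2_ebasis /sqnorm /barycenter sumR_const -/n; field; lra. Qed.

Lemma dist2_barycenter_gt0 k : 0 < dist2 (barycenter N) (ebasis k).
Proof. by rewrite dist2_barycenter; apply: Rdiv_lt_0_compat; lra. Qed.

Let dist2_barycenter_neq0 k : dist2 (barycenter N) (ebasis k) <> 0.
Proof. by have := dist2_barycenter_gt0 k; lra. Qed.

Lemma sum_inv_dist2_barycenter : sum_inv_dist2 (barycenter N) = n * (n / (n - 1)).
Proof.
rewrite /sum_inv_dist2 (eq_bigr (fun _ => n / (n - 1))) ?sumR_const // => k _.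
by rewrite dist2_barycenter; field; lra.
Qed.

Lemma sum_inv_dist2_sq_barycenter : sum_inv_dist2_sq (barycenter N) = n * (n / (n - 1)) ^ 2.
Proof.
rewrite /sum_inv_dist2_sq (eq_bigr (fun _ => (n / (n - 1)) ^ 2)) ?sumR_const // => k _.
by rewrite dist2_barycenter; field; lra.
Qed.

Lemma critical_point_barycenter : critical_point (@flog N) (barycenter N).
Proof.
apply: critical_point_flog => [|i]; first exact: dist2_barycenter_gt0.
rewrite gradfE // sum_inv_dist2_barycenter dist2_barycenter /barycenter -/n; field; lra.
Qed.

Definition hess_barycenter : 'M[R]_N := (\matrix_(i, j) hessf (barycenter N) i j)%R.

Lemma is_hessian_barycenter : is_hessian (@flog N) (barycenter N) hess_barycenter.
Proof.
apply: (is_hessian_flog (m := (n - 1) / n)); first by apply: Rdiv_lt_0_compat; lra.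
by move=> k; rewrite dist2_barycenter; lra.
Qed.

Let gam := 4 * n / (n - 1) ^ 2.
Let gam_gt0 : 0 < gam. Proof. by rewrite /gam; apply: Rdiv_lt_0_compat; nra. Qed.
Let w0 : vec N := fun _ => 0.
Let w0_sum : \big[Rplus/0]_(b < N) w0 b = 0.
Proof. by rewrite /w0 sumR_const; ring. Qed.
Let w0_sum2 : \big[Rplus/0]_(b < N) (w0 b * w0 b) = 0.
Proof. by rewrite /w0 (eq_bigr (fun _ => 0)) ?sumR_const => *; ring. Qed.

Lemma hessf_barycenter a b :
  hessf (barycenter N) a b = lambda2 N * iverson (a == b) + gam.
Proof.
rewrite hessfE // sum_inv_dist2_barycenter sum_inv_dist2_sq_barycenter.
rewrite !dist2_barycenter /barycenter /lambda2 /gam -/n (eq_sym b a).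
by case: (a == b); field; lra.
Qed.

Lemma hess_barycenterE a b :
  hess_barycenter a b = lambda2 N * iverson (a == b) + gam + 0 * w0 a * w0 b.
Proof. by rewrite mxE hessf_barycenter; ring. Qed.

Lemma lambda1_lambda2 : lambda1 N = lambda2 N + n * gam.
Proof. by rewrite /lambda1 /lambda2 /gam -/n; field; lra. Qed.

Lemma hess_barycenter_eigenvector_barycenter :
  (rowv (barycenter N) *m hess_barycenter)%R = (lambda1 N *: rowv (barycenter N))%R.
Proof.
apply/matrixP => i j; rewrite (ord1 i) (mulmx_IJw hess_barycenterE) row_sum_rowv !mxE.
by rewrite /barycenter sumR_const -/n mulRE lambda1_lambda2 /w0; R_eq_goal; field; lra.
Qed.

Lemma eigenvalue_hess_barycenter a :
  eigenvalue hess_barycenter a -> a = lambda1 N \/ a = lambda2 N.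
Proof.
move/eigenvalueP => [v hv vnz].
have [h1 _ h3] := eigenvector_IJw hess_barycenterE w0_sum w0_sum2 hv.
case: (Req_dec a (lambda1 N)) => ha; [by left | right].
have hS : row_sum v = 0.
  case: (Rmult_integral _ _ h1) => // h; exfalso; apply: ha.
  by rewrite lambda1_lambda2; rewrite -/n in h; lra.
have [b hb] := rV_neq0_coord vnz.
have := h3 b; rewrite hS /w0 => h.
have : (a - lambda2 N) * v ord0 b = 0 by rewrite h; ring.
by case/Rmult_integral => [?|/hb []]; lra.
Qed.

Lemma eig_mult_hess_barycenter_lambda1 : eig_mult hess_barycenter (lambda1 N) = 1%N.
Proof.
apply: (eig_mult_eq1 (u := barycenter N)).
- apply: (rowv_neq0 (b := Ordinal (leq_trans (isT : (0 < 4)%N) hN))).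
  by apply: Rinv_neq_0_compat; rewrite -/n; lra.
- exact: hess_barycenter_eigenvector_barycenter.
- move=> v hv; have [_ _ h3] := eigenvector_IJw hess_barycenterE w0_sum w0_sum2 hv.
  exists (row_sum v); apply: scale_rowv => b; rewrite /barycenter -/n.
  have := h3 b; rewrite /w0 lambda1_lambda2 => h.
  apply: (Rmult_eq_reg_l (n * gam)); last by nra.
  transitivity ((lambda2 N + n * gam - lambda2 N) * v ord0 b); first ring.
  by rewrite h; field; lra.
Qed.

Lemma eig_mult_hess_barycenter_lambda2 : eig_mult hess_barycenter (lambda2 N) = (N - 1)%N.
Proof.
rewrite /eig_mult /eigenspace mxrank_ker.
have -> : (hess_barycenter - (lambda2 N)%:M)%R = (gam *: (const_mx 1 : 'M[R]_N))%R.
  apply/matrixP => i j; rewrite !mxE hessf_barycenter.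
  by case: (i == j); rewrite ?GRing.mulr1n ?GRing.mulr0n addRE oppRE mulRE ?oneRE ?zeroRE;
     R_eq_goal; ring.
have -> : \rank (gam *: (const_mx 1 : 'M[R]_N))%R = 1%N; last by [].
rewrite -(rank_const1 (leq_trans (isT : (0 < 4)%N) hN)).
by apply/eqmx_rank/eqmxP/eqmx_scale/eqP; exact: Rgt_not_eq gam_gt0.
Qed.

Lemma hess_barycenter_unit : hess_barycenter \in unitmx.
Proof.
apply/unitmx_not_eigenvalue0/negP => /eigenvalue_hess_barycenter [].
  by rewrite /lambda1 -/n => h; have : 0 < 2 * n ^ 2 / (n - 1); [apply: Rdiv_lt_0_compat; nra | lra].
rewrite /lambda2 -/n => h; have : 0 < 2 * (n - 3) * (n / (n - 1)) ^ 2; last lra.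
by apply: Rmult_lt_0_compat; [lra | apply: pow_lt; apply: Rdiv_lt_0_compat; lra].
Qed.

End Barycenter.

(** * The saddle points Q_i *)

Section SaddlePoints.
Variable N : nat.
Hypothesis hN : (4 <= N)%N.
Variable i0 : 'I_N.
Let n := INR N.
Let hn : 4 <= n. Proof. exact: INR_ge4. Qed.

Lemma QptE m : Qpt i0 m = 2 / (n - 1) / n + (n - 3) / (n - 1) * iverson (m == i0).
Proof. by rewrite /Qpt /barycenter ebasisE -/n; field; lra. Qed.

Definition dist2_Q_near := 4 / (n * (n - 1)).
Definition dist2_Q_far := 2 * (n - 2) / n.

Lemma dist2_Q_near_gt0 : 0 < dist2_Q_near.
Proof. by rewrite /dist2_Q_near; apply: Rdiv_lt_0_compat; nra. Qed.
Lemma dist2_Q_far_gt0 : 0 < dist2_Q_far.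
Proof. by rewrite /dist2_Q_far; apply: Rdiv_lt_0_compat; nra. Qed.
Lemma dist2_Q_near_le_far : dist2_Q_near <= dist2_Q_far.
Proof.
rewrite /dist2_Q_near /dist2_Q_far; apply: (Rmult_le_reg_r (n * (n - 1))); first nra.
by field_simplify; nra.
Qed.

Lemma dist2_Qpt k : dist2 (Qpt i0) (ebasis k) =
  if k == i0 then dist2_Q_near else dist2_Q_far.
Proof.
rewrite dist2_ebasis; have -> : sqnorm (Qpt i0) = n * (2 / (n - 1) / n) ^ 2
   + (2 * (2 / (n - 1) / n) * ((n - 3) / (n - 1)) + ((n - 3) / (n - 1)) ^ 2).
  rewrite /sqnorm (eq_bigr (fun m => (2 / (n - 1) / n) ^ 2 + (2 * (2 / (n - 1) / n)
      * ((n - 3) / (n - 1)) + ((n - 3) / (n - 1)) ^ 2) * (iverson (m == i0) * 1))).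
    by rewrite sumR_add sumR_const sumR_scale sumR_iverson -/n; ring.
  by move=> m _; rewrite QptE; case: (m == i0); ring.
rewrite QptE /dist2_Q_near /dist2_Q_far; case: (k == i0); field; lra.
Qed.

Lemma dist2_Qpt_ge k : dist2_Q_near <= dist2 (Qpt i0) (ebasis k).
Proof. by rewrite dist2_Qpt; have := dist2_Q_near_le_far; case: (k == i0); lra. Qed.

Let dist2_Qpt_neq0 k : dist2 (Qpt i0) (ebasis k) <> 0.
Proof. by have := dist2_Qpt_ge k; have := dist2_Q_near_gt0; lra. Qed.

Lemma sum_inv_dist2_Qpt : sum_inv_dist2 (Qpt i0) =
  n / dist2_Q_far + (/ dist2_Q_near - / dist2_Q_far).
Proof.
rewrite /sum_inv_dist2 (eq_bigr (fun k => / dist2_Q_far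
    + (/ dist2_Q_near - / dist2_Q_far) * (iverson (k == i0) * 1))).
  have := dist2_Q_near_gt0; have := dist2_Q_far_gt0.
  by rewrite sumR_add sumR_const sumR_scale sumR_iverson -/n => *; field; split; lra.
by move=> k _; rewrite dist2_Qpt; case: (k == i0); ring.
Qed.

Lemma sum_inv_dist2_sq_Qpt : sum_inv_dist2_sq (Qpt i0) =
  n / dist2_Q_far ^ 2 + (/ dist2_Q_near ^ 2 - / dist2_Q_far ^ 2).
Proof.
rewrite /sum_inv_dist2_sq (eq_bigr (fun k => / dist2_Q_far ^ 2
    + (/ dist2_Q_near ^ 2 - / dist2_Q_far ^ 2) * (iverson (k == i0) * 1))).
  have := dist2_Q_near_gt0; have := dist2_Q_far_gt0.
  by rewrite sumR_add sumR_const sumR_scale sumR_iverson -/n => *; field; split; lra.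
by move=> k _; rewrite dist2_Qpt; case: (k == i0); ring.
Qed.

Lemma critical_point_Qpt : critical_point (@flog N) (Qpt i0).
Proof.
apply: critical_point_flog => [k|i].
  by have := dist2_Qpt_ge k; have := dist2_Q_near_gt0; lra.
rewrite gradfE // sum_inv_dist2_Qpt dist2_Qpt QptE /dist2_Q_near /dist2_Q_far.
by case: (i == i0); field; lra.
Qed.

Definition hess_Qpt : 'M[R]_N := (\matrix_(i, j) hessf (Qpt i0) i j)%R.

Lemma is_hessian_Qpt : is_hessian (@flog N) (Qpt i0) hess_Qpt.
Proof. exact: (is_hessian_flog dist2_Q_near_gt0 dist2_Qpt_ge). Qed.

(* The eigenvalues of hess_Qpt: eigQ_mid with multiplicity N - 2, eigQ_ones with
   eigenvector (1, ..., 1) and eigQ_neg with eigenvector wQ. *)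
Definition eigQ_mid := n ^ 3 * (n - 3) / (2 * (n - 2) ^ 2).
Definition eigQ_ones := n ^ 2 * (n - 1) / (2 * (n - 2)).
Definition eigQ_neg := - (n ^ 2 * (n - 3) / (2 * (n - 2))).
Definition wQ (m : 'I_N) := iverson (m == i0) - / n.

Let k1 := (eigQ_ones - eigQ_mid) / n.
Let k2 := (eigQ_neg - eigQ_mid) * n / (n - 1).

Lemma hess_QptE a b : hess_Qpt a b = eigQ_mid * iverson (a == b) + k1 + k2 * wQ a * wQ b.
Proof.
rewrite /hess_Qpt mxE hessfE // sum_inv_dist2_Qpt sum_inv_dist2_sq_Qpt !dist2_Qpt !QptE.
rewrite /wQ /k1 /k2 /eigQ_neg /eigQ_ones /eigQ_mid /dist2_Q_near /dist2_Q_far (eq_sym b a).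
have [ha|ha] := eqVneq a i0; have [hb|hb] := eqVneq b i0.
- by rewrite ha hb eqxx; field; lra.
- by rewrite ha eq_sym ?(negbTE hb); field; lra.
- by rewrite hb ?(negbTE ha); field; lra.
- by rewrite ?(negbTE ha) ?(negbTE hb); case: (a == b); field; lra.
Qed.

Lemma sum_wQ : \big[Rplus/0]_(b < N) wQ b = 0.
Proof.
rewrite /wQ (eq_bigr (fun b => iverson (b == i0) * 1 + (- / n))).
  by rewrite sumR_add sumR_iverson sumR_const -/n; field; lra.
by move=> b _; ring.
Qed.

Lemma sum_wQ_sq : \big[Rplus/0]_(b < N) (wQ b * wQ b) = (n - 1) / n.
Proof.
rewrite /wQ (eq_bigr (fun b => (1 - 2 / n) * (iverson (b == i0) * 1) + / n ^ 2)).
  by rewrite sumR_add sumR_scale sumR_iverson sumR_const -/n; field; lra.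
by move=> b _; case: (b == i0); field; lra.
Qed.

Lemma eigQ_mid_gt0 : 0 < eigQ_mid.
Proof.
rewrite /eigQ_mid; apply: Rdiv_lt_0_compat; last nra.
by apply: Rmult_lt_0_compat; [apply: pow_lt|]; lra.
Qed.
Lemma eigQ_ones_gt0 : 0 < eigQ_ones.
Proof.
rewrite /eigQ_ones; apply: Rdiv_lt_0_compat; last nra.
by apply: Rmult_lt_0_compat; [apply: pow_lt|]; lra.
Qed.
Lemma eigQ_neg_lt0 : eigQ_neg < 0.
Proof.
rewrite /eigQ_neg; have : 0 < n ^ 2 * (n - 3) / (2 * (n - 2)); last lra.
apply: Rdiv_lt_0_compat; last nra.
by apply: Rmult_lt_0_compat; [apply: pow_lt|]; lra.
Qed.

Let eigQ_ones_E : eigQ_mid + n * k1 = eigQ_ones.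
Proof. by rewrite /k1; field; lra. Qed.
Let eigQ_neg_E : eigQ_mid + k2 * ((n - 1) / n) = eigQ_neg.
Proof. by rewrite /k2; field; lra. Qed.

Lemma eigenvalue_hess_Qpt a :
  eigenvalue hess_Qpt a -> [\/ a = eigQ_mid, a = eigQ_ones | a = eigQ_neg].
Proof.
move/eigenvalueP => [v hv vnz].
have [] := eigenvector_IJw hess_QptE sum_wQ sum_wQ_sq hv.
rewrite -/n eigQ_ones_E eigQ_neg_E => h1 h2 h3.
case: (Req_dec a eigQ_ones) => hs; first by constructor 2.
case: (Req_dec a eigQ_neg) => hm; first by constructor 3.
have [hS hW] : row_sum v = 0 /\ row_dot wQ v = 0.
  by case: (Rmult_integral _ _ h1); case: (Rmult_integral _ _ h2); lra.
have [b hb] := rV_neq0_coord vnz.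
have := h3 b; rewrite hS hW => h.
have : (a - eigQ_mid) * v ord0 b = 0 by rewrite h; ring.
by case/Rmult_integral => [?|/hb []]; constructor 1; lra.
Qed.

Lemma hess_Qpt_unit : hess_Qpt \in unitmx.
Proof.
apply/unitmx_not_eigenvalue0/negP => /eigenvalue_hess_Qpt [] h.
- by have := eigQ_mid_gt0; lra.
- by have := eigQ_ones_gt0; lra.
- by have := eigQ_neg_lt0; lra.
Qed.

Lemma eig_mult_hess_Qpt_neg : eig_mult hess_Qpt eigQ_neg = 1%N.
Proof.
have hne : eigQ_neg - eigQ_mid <> 0 by have := eigQ_neg_lt0; have := eigQ_mid_gt0; lra.
apply: (eig_mult_eq1 (u := wQ)).
- apply: (rowv_neq0 (b := i0)); rewrite /wQ eqxx -/n => h.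
  have e : / n = 1 by lra.
  by have : n * / n = 1; [field; lra | rewrite e; lra].
- apply/matrixP => i j; rewrite (ord1 i) (mulmx_IJw hess_QptE).
  rewrite row_sum_rowv row_dot_rowv sum_wQ sum_wQ_sq !mxE mulRE -eigQ_neg_E.
  by R_eq_goal; ring.
- move=> v hv; have [h1 _ h3] := eigenvector_IJw hess_QptE sum_wQ sum_wQ_sq hv.
  rewrite -/n eigQ_ones_E in h1.
  have hS : row_sum v = 0.
    by case: (Rmult_integral _ _ h1) => //; have := eigQ_neg_lt0; have := eigQ_ones_gt0; lra.
  exists (k2 * row_dot wQ v / (eigQ_neg - eigQ_mid)); apply: scale_rowv => b.
  apply: (Rmult_eq_reg_l (eigQ_neg - eigQ_mid)) => //.
  by rewrite h3 hS; field.
Qed.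

Lemma negativity_index_hess_Qpt : negativity_index hess_Qpt 1.
Proof.
exists [:: eigQ_neg]; split; [by [] | split; [|split]].
- by move=> a; rewrite inE => /eqP ->; exact: eigQ_neg_lt0.
- move=> a ha /eigenvalue_hess_Qpt [] h; rewrite inE; apply/eqP => //.
  + by have := eigQ_mid_gt0; lra.
  + by have := eigQ_ones_gt0; lra.
- by rewrite big_seq1 eig_mult_hess_Qpt_neg.
Qed.

End SaddlePoints.

(** * Local minimality of B and the absolute minima of F *)

Section BarycenterLocalMin.
Variable N : nat.
Hypothesis hN : (4 <= N)%N.
Let n := INR N.
Let hn : 4 <= n. Proof. exact: INR_ge4. Qed.
Let c := (n - 1) / n.
Let c_ge : 3 / 4 <= c.
Proof. by rewrite /c; apply: (Rmult_le_reg_r n); [lra | field_simplify; lra]. Qed.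
Let c_le1 : c <= 1.
Proof. by rewrite /c; apply: (Rmult_le_reg_r n); [lra | field_simplify; lra]. Qed.

Variable y : vec N.
Let s := \big[Rplus/0]_(k < N) y k.
Let p := dist2 y (barycenter N).
Let A := \big[Rplus/0]_(k < N) (y k - s / n) ^ 2.
Let w k := dist2 y (ebasis k) - c.

Lemma dist2_barycenter_split : p = A + n * (s / n - / n) ^ 2.
Proof.
rewrite /p /dist2 /barycenter (eq_bigr (fun k => (y k - s / n) ^ 2
    + ((2 * (s / n - / n)) * y k + ((s / n - / n) ^ 2 - 2 * (s / n - / n) * (s / n))))).
  by rewrite !sumR_add sumR_scale !sumR_const -/n -/s -/A; field; lra.
by move=> k _; rewrite -/n; ring.
Qed.

Lemma dist2_shift_barycenter k : w k = p + 2 * (s / n - y k).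
Proof.
have -> : p = sqnorm y - 2 / n * s + / n.
  rewrite /p /dist2 /barycenter (eq_bigr (fun k => y k ^ 2 + ((-2 / n) * y k + / n ^ 2))).
    by rewrite !sumR_add sumR_scale sumR_const -/n -/s -/(sqnorm y); field; lra.
  by move=> j _; rewrite -/n; field; lra.
by rewrite /w dist2_ebasis /c; field; lra.
Qed.

Lemma sum_w : \big[Rplus/0]_(k < N) w k = n * p.
Proof.
rewrite (eq_bigr (fun k => (p + 2 * (s / n)) + (-2) * y k)).
  by rewrite !sumR_add !sumR_const !sumR_scale -/n -/s; field; lra.
by move=> k _; rewrite dist2_shift_barycenter; ring.
Qed.

Lemma sum_w_sq_le : \big[Rplus/0]_(k < N) (w k ^ 2) <= n * p ^ 2 + 4 * p.
Proof.
rewrite (eq_bigr (fun k => (p ^ 2 + 4 * p * (s / n))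
    + ((-4 * p) * y k + 4 * (y k - s / n) ^ 2))); last first.
  by move=> k _; rewrite dist2_shift_barycenter; ring.
rewrite !sumR_add !sumR_const !sumR_scale -/n -/s -/A.
have := dist2_barycenter_split.
have : 0 <= n * (s / n - / n) ^ 2 by apply: Rmult_le_pos; [lra | exact: pow2_ge_0].
by move=> *; field_simplify; lra.
Qed.

Hypothesis hp : p < / (100 * n) * / (100 * n).

Let p_ge0 : 0 <= p. Proof. exact: dist2_ge0. Qed.

Let np_small : n * p <= / 10.
Proof.
have h : / (100 * n) * / (100 * n) <= / (10 * n).
  by rewrite -Rinv_mult; apply: Rinv_le_contravar; nra.
have -> : / 10 = n * / (10 * n) by field; lra.
by apply: Rmult_le_compat_l; lra.
Qed.

Lemma w_small k : - (c / 5) <= w k <= c / 5.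
Proof.
have h1 : w k ^ 2 <= \big[Rplus/0]_(k < N) (w k ^ 2).
  exact: (sumR_ge_term (F := fun k => w k ^ 2)) (fun j => pow2_ge_0 _).
have h2 := sum_w_sq_le.
have h4 : p <= / 1000.
  have : / (100 * n) * / (100 * n) <= / 1000; last lra.
  by rewrite -Rinv_mult; apply: Rinv_le_contravar; nra.
have h6 : n * p ^ 2 <= p by nra.
have h7 : w k ^ 2 <= (c / 5) ^ 2 by nra.
by split; nra.
Qed.

Lemma ln_dist2_ge k :
  ln c + / c * w k + (- (5 / 8) / c ^ 2) * w k ^ 2 <= ln (dist2 y (ebasis k)).
Proof.
have [hw1 hw2] := w_small k.
have hu1 : - (1 / 5) <= w k / c by apply: (Rmult_le_reg_r c); [lra | field_simplify; lra].
have hu2 : w k / c <= 1 / 5 by apply: (Rmult_le_reg_r c); [lra | field_simplify; lra].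
have -> : dist2 y (ebasis k) = c * (1 + w k / c) by rewrite /w; field; lra.
rewrite ln_mult; [|lra|lra].
have := ln_ge_quadratic (u := w k / c) ltac:(lra).
have -> : w k / c - 5 / 8 * (w k / c) ^ 2 = / c * w k + - (5 / 8) / c ^ 2 * w k ^ 2.
  by field; lra.
lra.
Qed.

Lemma flog_barycenter_le : flog (barycenter N) <= flog y.
Proof.
have dist2_gt0 k : 0 < dist2 y (ebasis k) by have := w_small k; rewrite /w; lra.
rewrite /flog /Fprod ln_prodR; last exact: dist2_barycenter_gt0.
rewrite ln_prodR // (eq_bigr (fun _ => ln c)); last by move=> k _; rewrite dist2_barycenter.
apply: (Rle_trans _ (\big[Rplus/0]_(k < N) (ln c + (/ c * w k + (- (5 / 8) / c ^ 2) * w k ^ 2)))).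
  rewrite sumR_const !sumR_add !sumR_scale sumR_const sum_w -/n.
  have h2 := sum_w_sq_le.
  have hcc : 0 < / c ^ 2 by apply: Rinv_0_lt_compat; nra.
  have -> : / c * (n * p) + - (5 / 8) / c ^ 2 * \big[Rplus/0]_(k < N) (w k ^ 2)
          = / c ^ 2 * (c * n * p - 5 / 8 * \big[Rplus/0]_(k < N) (w k ^ 2)) by field; lra.
  have : 0 <= / c ^ 2 * (c * n * p - 5 / 8 * \big[Rplus/0]_(k < N) (w k ^ 2)); last lra.
  apply: Rmult_le_pos; first lra.
  have : c * n = n - 1 by rewrite /c; field; lra.
  nra.
by apply: sumR_le => k; have := ln_dist2_ge k; lra.
Qed.

End BarycenterLocalMin.

Lemma barycenter_local_min N : (4 <= N)%N -> exists d : R, 0 < d /\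
  forall y : vec N, dist2 y (barycenter N) < d * d -> flog (barycenter N) <= flog y.
Proof.
move=> hN; have hn := INR_ge4 hN.
exists (/ (100 * INR N)); split; first by apply: Rinv_0_lt_compat; lra.
by move=> y hy; exact: flog_barycenter_le.
Qed.

Lemma Fprod_ge0 N (x : vec N) : 0 <= Fprod x.
Proof. by apply: prodR_ge0 => k; exact: dist2_ge0. Qed.

Lemma Fprod_ebasis N (i : 'I_N) : Fprod (ebasis i) = 0.
Proof. by rewrite /Fprod (bigD1 i) //= dist2xx; exact: Rmult_0_l. Qed.

Lemma Fprod_eq0 N (x : vec N) : Fprod x = 0 -> exists k, x = ebasis k.
Proof.
move=> h; apply: NNPP => hn; move: h; rewrite /Fprod.
apply: (big_ind (fun a => a <> 0)) => //.
- by move=> a b; exact: Rmult_integral_contrapositive_currified.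
- by move=> k _ /dist2_eq0 e; apply: hn; exists k.
Qed.

Lemma Fprod_argmin N (x : vec N) : (0 < N)%N ->
  (forall y : vec N, Fprod x <= Fprod y) <-> exists i : 'I_N, x = ebasis i.
Proof.
move=> hN; split; last by move=> [i ->] y; rewrite Fprod_ebasis; exact: Fprod_ge0.
move=> h; apply: Fprod_eq0; apply: Rle_antisym; last exact: Fprod_ge0.
by have := h (ebasis (Ordinal hN)); rewrite Fprod_ebasis.
Qed.

Theorem proposition7p3 (N : nat) (hN : (4 <= N)%N) :
  (forall x : vec N,
     (forall y : vec N, Fprod x <= Fprod y) <-> exists i : 'I_N, x = ebasis i) /\
  critical_point (@flog N) (barycenter N) /\
  (exists H : 'M[R]_N,
     is_hessian (@flog N) (barycenter N) H /\
     mulmx (rowv (barycenter N)) H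
       = GRing.scale (lambda1 N) (rowv (barycenter N)) /\
     eig_mult H (lambda1 N) = 1%N /\
     eig_mult H (lambda2 N) = (N - 1)%N /\
     (forall a : R, eigenvalue H a ->
        a = lambda1 N \/
        a = lambda2 N) /\
     nondegenerate_hess H) /\
  (exists d : R, 0 < d /\
     forall y : vec N, dist2 y (barycenter N) < d * d ->
       flog (barycenter N) <= flog y) /\
  (forall i : 'I_N,
     critical_point (@flog N) (Qpt i) /\
     exists H : 'M[R]_N,
       is_hessian (@flog N) (Qpt i) H /\ nondegenerate_hess H /\
       negativity_index H 1).
Proof.
split; first by move=> x; apply: Fprod_argmin; exact: leq_trans hN.
split; first exact: critical_point_barycenter.
split.
  exists (hess_barycenter N); do !split.
  - exact: is_hessian_barycenter.
  - exact: hess_barycenter_eigenvector_barycenter.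
  - exact: eig_mult_hess_barycenter_lambda1.
  - exact: eig_mult_hess_barycenter_lambda2.
  - exact: eigenvalue_hess_barycenter.
  - exact: hess_barycenter_unit.
split; first exact: barycenter_local_min.
move=> i; split; first exact: critical_point_Qpt.
exists (hess_Qpt i); split; first exact: is_hessian_Qpt.
by split; [exact: hess_Qpt_unit | exact: negativity_index_hess_Qpt].
Qed.
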